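(* The rectangle locus for two pairs of lines in the plane is either the empty set, a point, a line with an open segment missing, a line, a hyperbola, or the entire plane.
   Context: A pair of lines means two distinct lines; two pairs of lines are distinct pairs, possibly sharing one line. The rectangle locus of two pairs $L_1,L_3$ and $L_2,L_4$ is the set of points $p$ in the plane that are the midpoint both of a segment joining $L_1$ and $L_3$ and of a segment joining $L_2$ and $L_4$, these two segments having equal length (equivalently, centers of possibly degenerate rectangles whose diagonals join the lines of the respective pairs). A hyperbola here may be degenerate, i.e. a set $\{{\bf x}:({\bf x}-{\bf p})^TC({\bf x}-{\bf p})=k\}$ with $C$ real symmetric $2\times2$, $\det C<0$, and any $k\in\mathbb{R}$. *)

From HB Require Import structures.
From mathcomp Require Import all_boot all_order all_algebra.
From mathcomp Require Import boolp classical_sets reals.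
Set Implicit Arguments. Unset Strict Implicit. Unset Printing Implicit Defensive.
Import Order.TTheory GRing.Theory Num.Theory.
Local Open Scope ring_scope.
Local Open Scope classical_set_scope.

Section Plane.
Variable R : realType.
Notation pt := (R * R)%type.

Definition is_line (L : set pt) : Prop :=
  exists p v : pt, v != (0, 0) /\
    L = [set x | exists t : R, x = (p.1 + t * v.1, p.2 + t * v.2)].

Definition midpoint (a b : pt) : pt := ((a.1 + b.1) / 2, (a.2 + b.2) / 2).

(* squared Euclidean distance (equal lengths <-> equal squared lengths) *)
Definition dist2 (a b : pt) : R := (a.1 - b.1) ^+ 2 + (a.2 - b.2) ^+ 2.

Definition rectangle_locus (L1 L3 L2 L4 : set pt) : set pt :=
  [set p | exists a1 a3 a2 a4 : pt,
     [/\ L1 a1, L3 a3, L2 a2, L4 a4 &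
       [/\ p = midpoint a1 a3, p = midpoint a2 a4 & dist2 a1 a3 = dist2 a2 a4]]].

Definition line_minus_open_segment (a b : pt) : set pt :=
  [set x | exists t : R, x = (a.1 + t * (b.1 - a.1), a.2 + t * (b.2 - a.2))
                         /\ (t <= 0 \/ 1 <= t)].

(* possibly degenerate hyperbola {x | (x-q)^T C (x-q) = k}, C = [[a,b],[b,c]],
   det C = a c - b^2 < 0, k arbitrary *)
Definition is_hyperbola (S : set pt) : Prop :=
  exists (q : pt) (a b c k : R), a * c - b ^+ 2 < 0 /\
    S = [set x | a * (x.1 - q.1) ^+ 2 + 2 * b * (x.1 - q.1) * (x.2 - q.2)
                 + c * (x.2 - q.2) ^+ 2 = k].

End Plane.

From HB Require Import structures.
From mathcomp Require Import all_boot all_order all_algebra.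
From mathcomp Require Import boolp classical_sets reals.
From mathcomp Require Import ring lra.
Set Implicit Arguments. Unset Strict Implicit. Unset Printing Implicit Defensive.
Import Order.TTheory GRing.Theory Num.Theory.
Local Open Scope ring_scope.
Local Open Scope classical_set_scope.

(* Between two crossing lines a point x is the midpoint of exactly one chord, and the chord
   vector depends affinely on x with determinant -4.  Between two parallel lines the midpoints
   fill the middle parallel, and at each of them every chord length at least the distance of
   the lines occurs.  If both pairs cross, the locus is thus {x | |f x|^2 = |g x|^2} with f, g
   affine of equal determinant: the quadratic parts are positive definite with the same
   determinant, so their difference is zero or indefinite, and the locus is a line, the plane,
   the empty set or a hyperbola.  If exactly one pair is parallel, the locus is the set of
   points of a line where a quadratic with positive leading coefficient is nonnegative: the
   whole line or the line minus an open segment.  If both pairs are parallel, it is the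
   intersection of the two middle parallels. *)

Section RectangleLocus.
Variable R : realType.
Notation pt := (R * R)%type.

Definition cross (u v : pt) : R := u.1 * v.2 - u.2 * v.1.

Definition dot (u v : pt) : R := u.1 * v.1 + u.2 * v.2.

Definition sqnorm (u : pt) : R := u.1 ^+ 2 + u.2 ^+ 2.

Definition param_line (p v : pt) : set pt :=
  [set x | exists t : R, x = (p.1 + t * v.1, p.2 + t * v.2)].

Definition allowed_shape (S : set pt) : Prop :=
  S = set0 \/ (exists q : pt, S = [set q]) \/
  (exists a b : pt, a != b /\ S = line_minus_open_segment a b) \/
  is_line S \/ is_hyperbola S \/ S = setT.

Lemma sqnorm_ge0 (v : pt) : 0 <= sqnorm v.
Proof. by rewrite addr_ge0 ?sqr_ge0. Qed.

Lemma sqnorm_eq0 (v : pt) : (sqnorm v == 0) = (v == (0, 0)).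
Proof. by case: v => a b; rewrite /sqnorm paddr_eq0 ?sqr_ge0 // !sqrf_eq0. Qed.

Lemma sqnorm_gt0 (v : pt) : (0 < sqnorm v) = (v != (0, 0)).
Proof. by rewrite lt_neqAle sqnorm_ge0 andbT eq_sym sqnorm_eq0. Qed.

Lemma is_lineP (L : set pt) :
  is_line L -> exists p v, v != (0, 0) /\ L = param_line p v.
Proof. by []. Qed.

Lemma is_line_param_line (p v : pt) : v != (0, 0) -> is_line (param_line p v).
Proof. by move=> nz_v; exists p, v. Qed.

Lemma param_line_scale (p v : pt) (k : R) : k != 0 ->
  param_line p (k * v.1, k * v.2) = param_line p v.
Proof.
move=> nz_k; rewrite eqEsubset; split=> _ [t ->] /=.
  by exists (t * k); congr pair => /=; ring.
by exists (t / k); congr pair => /=; field.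
Qed.

Lemma param_line_shift (p v q : pt) :
  param_line p v q -> param_line q v = param_line p v.
Proof.
move=> [t0 ->]; rewrite eqEsubset; split=> _ [t ->] /=.
  by exists (t0 + t); congr pair => /=; ring.
by exists (t - t0); congr pair => /=; ring.
Qed.

Lemma cross_eq0_scale (v w : pt) : v != (0, 0) -> w != (0, 0) -> cross v w = 0 ->
  exists2 k : R, k != 0 & w = (k * v.1, k * v.2).
Proof.
case: v w => [a b] [c d]; rewrite /cross /= => nz_v nz_w det0.
suff [k def_w] : exists k, (c, d) = (k * a, k * b).
  by exists k => //; apply: contraNneq nz_w => k0; rewrite def_w k0 !mul0r.
have [a0 | nz_a] := eqVneq a 0.
  have nz_b : b != 0 by apply: contraNneq nz_v => b0; rewrite a0 b0.
  have : b * c = 0 by move: det0; rewrite a0; lra.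
  move=> /eqP; rewrite mulf_eq0 (negbTE nz_b) => /eqP c0.
  by exists (d / b); rewrite a0 c0; congr pair; field.
exists (c / a); congr pair; first by field.
by apply: (mulfI nz_a); rewrite mulrCA -[a * d](subrK (b * c)) det0 add0r; field.
Qed.

Lemma quadratic_has_root (a b c : R) : 0 < a ->
  (exists r, a * r ^+ 2 + 2 * b * r + c = 0) <-> 0 <= b ^+ 2 - a * c.
Proof.
move=> a_gt0; have nz_a : a != 0 by rewrite gt_eqF.
have completed r : a * (a * r ^+ 2 + 2 * b * r + c) = (a * r + b) ^+ 2 - (b ^+ 2 - a * c).
  by ring.
split=> [[r root_r] | disc_ge0].
  by have := completed r; rewrite root_r mulr0; have := sqr_ge0 (a * r + b); lra.
have s2 := sqr_sqrtr disc_ge0; set s := Num.sqrt _ in s2.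
exists ((- b + s) / a); apply: (mulfI nz_a).
by rewrite completed mulr0 -s2; apply/eqP; rewrite subr_eq0; apply/eqP; congr (_ ^+ 2); field.
Qed.

Lemma quadratic_ge0 (A B C u : R) : 0 < A -> B ^+ 2 - A * C <= 0 ->
  0 <= A * u ^+ 2 + 2 * B * u + C.
Proof.
move=> A_gt0 disc_le0; rewrite -(pmulr_rge0 _ A_gt0).
have -> : A * (A * u ^+ 2 + 2 * B * u + C) = (A * u + B) ^+ 2 - (B ^+ 2 - A * C) by ring.
by have := sqr_ge0 (A * u + B); lra.
Qed.

Lemma quadratic_ge0_outside_roots (A B C : R) : 0 < A -> 0 < B ^+ 2 - A * C ->
  exists u1 u2, u1 < u2 /\
    forall u, 0 <= A * u ^+ 2 + 2 * B * u + C <-> u <= u1 \/ u2 <= u.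
Proof.
move=> A_gt0 disc_gt0; have nz_A : A != 0 by rewrite gt_eqF.
have s_gt0 : 0 < Num.sqrt (B ^+ 2 - A * C) by rewrite sqrtr_gt0.
have s2 := sqr_sqrtr (ltW disc_gt0).
set s := Num.sqrt _ in s_gt0 s2.
set u1 := (- B - s) / A; set u2 := (- B + s) / A.
have u12 : u1 < u2 by rewrite ltr_pM2r ?invr_gt0 //; lra.
exists u1, u2; split=> // u.
have -> : A * u ^+ 2 + 2 * B * u + C = A * ((u - u1) * (u - u2)).
  have -> : C = (B ^+ 2 - s ^+ 2) / A by rewrite s2; field.
  by rewrite /u1 /u2; field.
rewrite pmulr_rge0 //; split=> [prod_ge0 | [le_u1 | ge_u2]].
- case: (lerP u u1) => [|lt_u1]; first by left.
  right; case: (lerP u2 u) => // lt_u2.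
  by move: prod_ge0; rewrite pmulr_rge0 ?subr_gt0 //; lra.
- by rewrite -mulrNN mulr_ge0 // oppr_ge0 subr_le0 // (le_trans le_u1 (ltW u12)).
- by rewrite mulr_ge0 // subr_ge0 // (le_trans (ltW u12) ge_u2).
Qed.

Lemma sqnorm_on_line_attains (E V : pt) (T : R) : V != (0, 0) ->
  (exists r, T = sqnorm (E.1 + r * V.1, E.2 + r * V.2)) <->
  0 <= dot E V ^+ 2 - sqnorm V * (sqnorm E - T).
Proof.
move=> nz_V; rewrite -quadratic_has_root ?sqnorm_gt0 //.
have expand r : sqnorm (E.1 + r * V.1, E.2 + r * V.2) - T =
    sqnorm V * r ^+ 2 + 2 * dot E V * r + (sqnorm E - T).
  by rewrite /sqnorm /dot /=; ring.
by split=> -[r eq_r]; exists r; move: (expand r); rewrite ?eq_r; lra.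
Qed.

Lemma sqnorm_on_line_attains_ge (E V : pt) (T : R) : V != (0, 0) -> sqnorm E <= T ->
  exists r, T = sqnorm (E.1 + r * V.1, E.2 + r * V.2).
Proof.
move=> nz_V le_ET; apply/sqnorm_on_line_attains => //.
rewrite subr_ge0 (le_trans _ (sqr_ge0 _)) // mulr_ge0_le0 ?sqnorm_ge0 //.
by rewrite subr_le0.
Qed.

Definition quadric (a b c l m n : R) : set pt :=
  [set x | a * x.1 ^+ 2 + 2 * b * x.1 * x.2 + c * x.2 ^+ 2 + l * x.1 + m * x.2 + n = 0].

Lemma affine_zero_set_shape (l m n : R) :
  allowed_shape [set x : pt | l * x.1 + m * x.2 + n = 0].
Proof.
have [lm0 | nz_lm] := eqVneq (l, m) (0, 0).
  case: lm0 => -> ->; have [-> | nz_n] := eqVneq n 0.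
    by do 5 right; rewrite -subTset => x _ /=; ring.
  by left; rewrite -subset0 => x /=; rewrite !mul0r !add0r => /eqP; rewrite (negbTE nz_n).
have lm_gt0 : 0 < l ^+ 2 + m ^+ 2 by rewrite (sqnorm_gt0 (l, m)).
set q := (- n * l / (l ^+ 2 + m ^+ 2), - n * m / (l ^+ 2 + m ^+ 2)).
suff -> : [set x : pt | l * x.1 + m * x.2 + n = 0] = param_line q (- m, l).
  do 3 right; left; apply: is_line_param_line.
  by rewrite -sqnorm_gt0 /sqnorm /= sqrrN addrC.
rewrite eqEsubset; split=> [[x1 x2] /= on_x | _ [t ->] /=]; last first.
  by rewrite /q /=; field; lra.
exists ((- m * x1 + l * x2) / (l ^+ 2 + m ^+ 2)).
rewrite /q; have -> : n = - (l * x1 + m * x2) by lra.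
by congr pair => /=; field; lra.
Qed.

Lemma indefinite_quadric_hyperbola (a b c l m n : R) : a * c - b ^+ 2 < 0 ->
  is_hyperbola (quadric a b c l m n).
Proof.
move=> det_lt0; have nz_det : a * c - b ^+ 2 != 0 by rewrite lt_eqF.
set q1 := (b * m - c * l) / (2 * (a * c - b ^+ 2)).
set q2 := (b * l - a * m) / (2 * (a * c - b ^+ 2)).
set k := a * q1 ^+ 2 + 2 * b * q1 * q2 + c * q2 ^+ 2 - n.
have shift (x : pt) :
    a * (x.1 - q1) ^+ 2 + 2 * b * (x.1 - q1) * (x.2 - q2) + c * (x.2 - q2) ^+ 2
    = a * x.1 ^+ 2 + 2 * b * x.1 * x.2 + c * x.2 ^+ 2 + l * x.1 + m * x.2 + n + k.
  by rewrite /k /q1 /q2; field.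
exists (q1, q2), a, b, c, k; split=> //.
by rewrite /quadric eqEsubset; split=> x /=; rewrite shift; lra.
Qed.

Lemma quadric_shape (a b c l m n : R) :
  (a = 0 /\ b = 0 /\ c = 0) \/ a * c - b ^+ 2 < 0 -> allowed_shape (quadric a b c l m n).
Proof.
case=> [[-> [-> ->]] | det_lt0]; last by do 4 right; left; exact: indefinite_quadric_hyperbola.
suff -> : quadric 0 0 0 l m n = [set x | l * x.1 + m * x.2 + n = 0].
  exact: affine_zero_set_shape.
by rewrite /quadric eqEsubset; split=> x /=; lra.
Qed.

Lemma eq_det_forms_eq_or_sub_indef (a b c a' b' c' : R) :
  0 <= a -> 0 <= a' -> 0 < a * c - b ^+ 2 -> a * c - b ^+ 2 = a' * c' - b' ^+ 2 ->
  (a = a' /\ b = b' /\ c = c') \/ (a - a') * (c - c') - (b - b') ^+ 2 < 0.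
Proof.
move=> a_ge0 a'_ge0 det_gt0 eq_det.
have a_gt0 : 0 < a.
  by rewrite lt_def a_ge0 andbT; apply: contraTneq det_gt0 => ->; have := sqr_ge0 b; lra.
have a'_gt0 : 0 < a'.
  rewrite lt_def a'_ge0 andbT; apply: contraTneq det_gt0 => a'0.
  by rewrite eq_det a'0; have := sqr_ge0 b'; lra.
have key : a * a' * ((b - b') ^+ 2 - (a - a') * (c - c'))
    = (a * c - b ^+ 2) * (a - a') ^+ 2 + (a * b' - a' * b) ^+ 2.
  apply/eqP; rewrite -subr_eq0; apply/eqP.
  transitivity (a * (a - a') * (a' * c' - b' ^+ 2 - (a * c - b ^+ 2))); first by ring.
  by rewrite -eq_det subrr mulr0.
have [disc_lt0 | disc_ge0] := ltP ((a - a') * (c - c') - (b - b') ^+ 2) 0; [by right | left].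
have : a * a' * ((b - b') ^+ 2 - (a - a') * (c - c')) <= 0.
  by rewrite pmulr_rle0 ?mulr_gt0 //; lra.
rewrite key => sum_le0.
have sq1 := sqr_ge0 (a - a'); have sq2 := sqr_ge0 (a * b' - a' * b).
have : (a - a') ^+ 2 = 0 by apply/eqP; rewrite eq_le sq1 andbT -(pmulr_rle0 _ det_gt0); nra.
move=> /eqP; rewrite sqrf_eq0 subr_eq0 => /eqP ea; subst a'.
have : (a * b' - a * b) ^+ 2 = 0 by lra.
move=> /eqP; rewrite sqrf_eq0 -mulrBr mulf_eq0 gt_eqF //= subr_eq0 => /eqP eb; subst b'.
by split=> //; split=> //; apply: (mulfI (lt0r_neq0 a_gt0)); lra.
Qed.

Lemma quadratic_ge0_on_line_shape (M V : pt) (A B C : R) : V != (0, 0) -> 0 < A ->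
  allowed_shape [set x | exists u, x = (M.1 + u * V.1, M.2 + u * V.2) /\
                                   0 <= A * u ^+ 2 + 2 * B * u + C].
Proof.
move=> nz_V A_gt0.
have [disc_le0 | disc_gt0] := lerP (B ^+ 2 - A * C) 0.
  do 3 right; left; suff -> : [set x | exists u, x = (M.1 + u * V.1, M.2 + u * V.2) /\
      0 <= A * u ^+ 2 + 2 * B * u + C] = param_line M V by exact: is_line_param_line.
  rewrite eqEsubset; split=> [_ [u [-> _]] | _ [u ->]]; first by exists u.
  by exists u; split=> //; apply: quadratic_ge0.
have [u1 [u2 [lt_u12 ge0E]]] := quadratic_ge0_outside_roots A_gt0 disc_gt0.
have nz_u21 : u2 - u1 != 0 by rewrite subr_eq0 gt_eqF.
right; right; left.
exists (M.1 + u1 * V.1, M.2 + u1 * V.2), (M.1 + u2 * V.1, M.2 + u2 * V.2); split.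
  apply: contraNneq nz_V => -[e1 e2].
  have v1 : V.1 = 0 by apply: (mulfI nz_u21); rewrite mulr0; lra.
  have v2 : V.2 = 0 by apply: (mulfI nz_u21); rewrite mulr0; lra.
  by rewrite [V]surjective_pairing v1 v2.
rewrite eqEsubset; split=> [_ [u [-> /ge0E u_out]] | _ [u [-> u_out]]].
  exists ((u - u1) / (u2 - u1)); split; first by congr pair => /=; field.
  case: u_out => [le_u1 | ge_u2]; [left | right].
    by rewrite pmulr_lle0 ?invr_gt0 ?subr_gt0 // subr_le0.
  by rewrite ler_pdivlMr ?subr_gt0 // mul1r lerB.
exists (u1 + u * (u2 - u1)); split; first by congr pair => /=; ring.
by apply/ge0E; case: u_out => ?; [left | right]; nra.
Qed.

Lemma param_line_meet_shape (M V M' V' : pt) : V != (0, 0) -> V' != (0, 0) ->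
  allowed_shape (param_line M V `&` param_line M' V').
Proof.
move=> nz_V nz_V'.
have [par | nz_cross] := eqVneq (cross V V') 0.
  have [k nz_k ->] := cross_eq0_scale nz_V nz_V' par; rewrite param_line_scale //.
  have [-> | /set0P [x0 [on_x0 on_x0']]] := eqVneq (param_line M V `&` param_line M' V) set0.
    by left.
  do 3 right; left.
  rewrite -(param_line_shift on_x0) -(param_line_shift on_x0') setIid.
  exact: is_line_param_line.
right; left.
set W := (M'.1 - M.1, M'.2 - M.2).
exists (M.1 + cross W V' / cross V V' * V.1, M.2 + cross W V' / cross V V' * V.2).
rewrite eqEsubset; split=> [_ [[t ->] [t' [e1 e2]]] | _ ->] /=.
  suff -> : t = cross W V' / cross V V' by [].
  apply: (mulIf nz_cross); rewrite divfK // /W /cross /=.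
  have f1 := congr1 ( *%R^~ V'.2) e1; have f2 := congr1 ( *%R^~ V'.1) e2; simpl in f1, f2.
  lra.
split; first by eexists.
exists (cross W V / cross V V'); move: nz_cross; rewrite /W /cross /= => nz_cross.
by congr pair; field.
Qed.

Record affine_map := AffineMap { m11 : R; m12 : R; m21 : R; m22 : R; shift : pt }.

Definition aff_lin (f : affine_map) (v : pt) : pt :=
  (m11 f * v.1 + m12 f * v.2, m21 f * v.1 + m22 f * v.2).

Definition aff_app (f : affine_map) (x : pt) : pt :=
  ((aff_lin f x).1 + (shift f).1, (aff_lin f x).2 + (shift f).2).

Definition aff_det (f : affine_map) : R := m11 f * m22 f - m12 f * m21 f.

Lemma aff_lin_eq0 (f : affine_map) (v : pt) :
  aff_det f != 0 -> aff_lin f v = (0, 0) -> v = (0, 0).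
Proof.
move=> nz_det lin0.
have : aff_det f * v.1 = m22 f * (aff_lin f v).1 - m12 f * (aff_lin f v).2.
  by rewrite /aff_det /=; ring.
rewrite lin0 /= !mulr0 subrr => /eqP; rewrite mulf_eq0 (negbTE nz_det) => /eqP v1.
have : aff_det f * v.2 = m11 f * (aff_lin f v).2 - m21 f * (aff_lin f v).1.
  by rewrite /aff_det /=; ring.
rewrite lin0 /= !mulr0 subrr => /eqP; rewrite mulf_eq0 (negbTE nz_det) => /eqP v2.
by rewrite [v]surjective_pairing v1 v2.
Qed.

Lemma aff_app_line (f : affine_map) (M V : pt) (u : R) :
  aff_app f (M.1 + u * V.1, M.2 + u * V.2) =
  ((aff_app f M).1 + u * (aff_lin f V).1, (aff_app f M).2 + u * (aff_lin f V).2).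
Proof. by congr pair => /=; ring. Qed.

Lemma sqnorm_aff_app_quadratic (f : affine_map) : exists a b c l m n : R,
  [/\ 0 <= a, a * c - b ^+ 2 = aff_det f ^+ 2 &
    forall x, sqnorm (aff_app f x) =
      a * x.1 ^+ 2 + 2 * b * x.1 * x.2 + c * x.2 ^+ 2 + l * x.1 + m * x.2 + n].
Proof.
case: f => a11 a12 a21 a22 [s1 s2].
exists (a11 ^+ 2 + a21 ^+ 2), (a11 * a12 + a21 * a22), (a12 ^+ 2 + a22 ^+ 2).
exists (2 * (a11 * s1 + a21 * s2)), (2 * (a12 * s1 + a22 * s2)), (s1 ^+ 2 + s2 ^+ 2).
by split=> [|| x]; rewrite ?addr_ge0 ?sqr_ge0 // /aff_det /sqnorm /=; ring.
Qed.

Lemma sqnorm_aff_eq_shape (f g : affine_map) :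
  aff_det f != 0 -> aff_det f ^+ 2 = aff_det g ^+ 2 ->
  allowed_shape [set x | sqnorm (aff_app f x) = sqnorm (aff_app g x)].
Proof.
move=> nz_det eq_det.
have [a [b [c [l [m [n [a_ge0 det_f sqf]]]]]]] := sqnorm_aff_app_quadratic f.
have [a' [b' [c' [l' [m' [n' [a'_ge0 det_g sqg]]]]]]] := sqnorm_aff_app_quadratic g.
suff -> : [set x | sqnorm (aff_app f x) = sqnorm (aff_app g x)] =
          quadric (a - a') (b - b') (c - c') (l - l') (m - m') (n - n').
  have det_gt0 : 0 < a * c - b ^+ 2 by rewrite det_f exprn_even_gt0.
  have eq_dets : a * c - b ^+ 2 = a' * c' - b' ^+ 2 by rewrite det_f det_g.
  have := eq_det_forms_eq_or_sub_indef a_ge0 a'_ge0 det_gt0 eq_dets.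
  by case=> [[-> [-> ->]] | indef]; apply: quadric_shape; [left; rewrite !subrr | right].
by rewrite /quadric eqEsubset; split=> x /=; rewrite sqf sqg; lra.
Qed.

Definition chord_rel (L L' : set pt) (x : pt) (d : R) : Prop :=
  exists a a', [/\ L a, L' a', x = midpoint a a' & d = dist2 a a'].

Lemma rectangle_locusE (L1 L3 L2 L4 : set pt) :
  rectangle_locus L1 L3 L2 L4 = [set x | exists d, chord_rel L1 L3 x d /\ chord_rel L2 L4 x d].
Proof.
rewrite eqEsubset; split=> x.
  move=> [a1 [a3 [a2 [a4 [on1 on3 on2 on4 [mid13 mid24 eq_len]]]]]].
  by exists (dist2 a1 a3); split; [exists a1, a3 | exists a2, a4].
move=> [d [[a1 [a3 [on1 on3 mid13 ->]]] [a2 [a4 [on2 on4 mid24 len24]]]]].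
by exists a1, a3, a2, a4.
Qed.

Lemma rectangle_locusC (L1 L3 L2 L4 : set pt) :
  rectangle_locus L1 L3 L2 L4 = rectangle_locus L2 L4 L1 L3.
Proof. by rewrite !rectangle_locusE eqEsubset; split=> x [d [ch13 ch24]]; exists d. Qed.

(* The vector a' - a of the chord with midpoint x; its linear part is twice the oblique
   reflection fixing V' and reversing V. *)
Definition chord_map (P V P' V' : pt) : affine_map :=
  let D := cross V V' in
  let a11 := - 2 * (V.1 * V'.2 + V.2 * V'.1) / D in
  let a12 := 4 * V.1 * V'.1 / D in
  let a21 := - 4 * V.2 * V'.2 / D in
  let a22 := 2 * (V.1 * V'.2 + V.2 * V'.1) / D in
  AffineMap a11 a12 a21 a22
    (P'.1 - P.1 - (a11 * (P.1 + P'.1) + a12 * (P.2 + P'.2)) / 2,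
     P'.2 - P.2 - (a21 * (P.1 + P'.1) + a22 * (P.2 + P'.2)) / 2).

Lemma chord_map_det (P V P' V' : pt) :
  cross V V' != 0 -> aff_det (chord_map P V P' V') = - 4.
Proof. by move=> nz_cross; rewrite /aff_det /= /cross in nz_cross *; field. Qed.

Lemma chord_map_midpoint (P V P' V' : pt) (s t : R) : cross V V' != 0 ->
  let a := (P.1 + s * V.1, P.2 + s * V.2) in let a' := (P'.1 + t * V'.1, P'.2 + t * V'.2) in
  aff_app (chord_map P V P' V') (midpoint a a') = (a'.1 - a.1, a'.2 - a.2).
Proof.
by move=> nz_cross; congr pair; rewrite /= /cross in nz_cross *; field.
Qed.

Lemma chord_rel_crossing (P V P' V' x : pt) (d : R) : cross V V' != 0 ->
  chord_rel (param_line P V) (param_line P' V') x d <->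
  d = sqnorm (aff_app (chord_map P V P' V') x).
Proof.
move=> nz_cross; split.
  move=> [_ [_ [[s ->] [t ->] -> ->]]].
  by rewrite chord_map_midpoint // /dist2 /sqnorm /=; ring.
set w := (2 * x.1 - P.1 - P'.1, 2 * x.2 - P.2 - P'.2).
set s := cross w V' / cross V V'; set t := cross V w / cross V V'.
have mid_x : x = midpoint (P.1 + s * V.1, P.2 + s * V.2) (P'.1 + t * V'.1, P'.2 + t * V'.2).
  move: nz_cross; rewrite /midpoint /s /t /w /cross /= => nz_cross.
  by rewrite [x]surjective_pairing; congr pair => /=; field.
move=> ->; exists (P.1 + s * V.1, P.2 + s * V.2), (P'.1 + t * V'.1, P'.2 + t * V'.2).
split=> //; [by exists s | by exists t |].
by rewrite {1}mid_x chord_map_midpoint // /dist2 /sqnorm /=; ring.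
Qed.

Lemma chord_rel_parallel (P P' V x : pt) (d : R) :
  chord_rel (param_line P V) (param_line P' V) x d <->
  exists u r, x = ((midpoint P P').1 + u * V.1, (midpoint P P').2 + u * V.2) /\
              d = sqnorm (P.1 - P'.1 + r * V.1, P.2 - P'.2 + r * V.2).
Proof.
split.
  move=> [_ [_ [[s ->] [t ->] -> ->]]].
  exists ((s + t) / 2), (s - t); split; first by congr pair => /=; field.
  by rewrite /dist2 /sqnorm /=; ring.
move=> [u [r [-> ->]]].
exists (P.1 + (u + r / 2) * V.1, P.2 + (u + r / 2) * V.2).
exists (P'.1 + (u - r / 2) * V.1, P'.2 + (u - r / 2) * V.2).
split; [by eexists | by eexists | by congr pair => /=; field |].
by rewrite /dist2 /sqnorm /=; field.
Qed.

Lemma crossing_pairs_shape (P1 V1 P3 V3 P2 V2 P4 V4 : pt) :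
  cross V1 V3 != 0 -> cross V2 V4 != 0 ->
  allowed_shape (rectangle_locus (param_line P1 V1) (param_line P3 V3)
                                 (param_line P2 V2) (param_line P4 V4)).
Proof.
move=> nz13 nz24.
suff -> : rectangle_locus (param_line P1 V1) (param_line P3 V3)
                          (param_line P2 V2) (param_line P4 V4) =
    [set x | sqnorm (aff_app (chord_map P1 V1 P3 V3) x) =
             sqnorm (aff_app (chord_map P2 V2 P4 V4) x)].
  by apply: sqnorm_aff_eq_shape; rewrite !chord_map_det // oppr_eq0 pnatr_eq0.
rewrite rectangle_locusE eqEsubset; split=> x /=.
  by move=> [d]; rewrite !chord_rel_crossing // => -[-> ->].
by move=> eq_len; exists (sqnorm (aff_app (chord_map P1 V1 P3 V3) x));
  rewrite !chord_rel_crossing.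
Qed.

Lemma crossing_parallel_shape (P1 V1 P3 V3 P2 P4 V : pt) :
  cross V1 V3 != 0 -> V != (0, 0) ->
  allowed_shape (rectangle_locus (param_line P1 V1) (param_line P3 V3)
                                 (param_line P2 V) (param_line P4 V)).
Proof.
move=> nz13 nz_V.
set f := chord_map P1 V1 P3 V3; set M := midpoint P2 P4.
set E := (P2.1 - P4.1, P2.2 - P4.2); set z := aff_app f M; set w := aff_lin f V.
have nz_det : aff_det f != 0 by rewrite chord_map_det // oppr_eq0 pnatr_eq0.
have nz_w : w != (0, 0) by apply: contraNneq nz_V => /(aff_lin_eq0 nz_det) ->.
set A := sqnorm V * sqnorm w; set B := sqnorm V * dot z w.
set C := sqnorm V * sqnorm z + dot E V ^+ 2 - sqnorm V * sqnorm E.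
have expand u : dot E V ^+ 2 - sqnorm V * (sqnorm E -
    sqnorm (aff_app f (M.1 + u * V.1, M.2 + u * V.2))) = A * u ^+ 2 + 2 * B * u + C.
  by rewrite aff_app_line /A /B /C /sqnorm /dot /=; ring.
suff -> : rectangle_locus (param_line P1 V1) (param_line P3 V3)
                          (param_line P2 V) (param_line P4 V) =
    [set x | exists u, x = (M.1 + u * V.1, M.2 + u * V.2) /\
                       0 <= A * u ^+ 2 + 2 * B * u + C].
  by apply: quadratic_ge0_on_line_shape => //; rewrite mulr_gt0 ?sqnorm_gt0.
rewrite rectangle_locusE eqEsubset; split=> x /=.
  move=> [d []]; rewrite chord_rel_crossing // => -> /chord_rel_parallel [u [r [-> len_d]]].
  by exists u; split=> //; rewrite -expand -sqnorm_on_line_attains //; exists r.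
move=> [u [-> ]]; rewrite -expand -sqnorm_on_line_attains // => -[r len_r].
exists (sqnorm (aff_app f (M.1 + u * V.1, M.2 + u * V.2))).
by rewrite chord_rel_crossing // chord_rel_parallel; split=> //; exists u, r.
Qed.

Lemma parallel_pairs_shape (P1 P3 V P2 P4 W : pt) : V != (0, 0) -> W != (0, 0) ->
  allowed_shape (rectangle_locus (param_line P1 V) (param_line P3 V)
                                 (param_line P2 W) (param_line P4 W)).
Proof.
move=> nz_V nz_W.
suff -> : rectangle_locus (param_line P1 V) (param_line P3 V)
                          (param_line P2 W) (param_line P4 W) =
    param_line (midpoint P1 P3) V `&` param_line (midpoint P2 P4) W.
  exact: param_line_meet_shape.
rewrite rectangle_locusE eqEsubset; split=> x /=.
  move=> [d [/chord_rel_parallel [u [r [on13 _]]] /chord_rel_parallel [u' [r' [on24 _]]]]].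
  by split; [exists u | exists u'].
move=> [[u on13] [u' on24]].
set E := (P1.1 - P3.1, P1.2 - P3.2); set E' := (P2.1 - P4.1, P2.2 - P4.2).
have le_E : sqnorm E <= sqnorm E + sqnorm E' by rewrite lerDl sqnorm_ge0.
have le_E' : sqnorm E' <= sqnorm E + sqnorm E' by rewrite lerDr sqnorm_ge0.
have [r len_r] := sqnorm_on_line_attains_ge nz_V le_E.
have [r' len_r'] := sqnorm_on_line_attains_ge nz_W le_E'.
exists (sqnorm E + sqnorm E'); rewrite !chord_rel_parallel.
by split; [exists u, r | exists u', r'].
Qed.

End RectangleLocus.

Theorem corollary4p9 (R : realType) (L1 L3 L2 L4 : set (R * R)) :
  is_line L1 -> is_line L3 -> is_line L2 -> is_line L4 ->
  L1 <> L3 -> L2 <> L4 ->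
  ~ ((L1 = L2 /\ L3 = L4) \/ (L1 = L4 /\ L3 = L2)) ->
  let S := rectangle_locus L1 L3 L2 L4 in
  S = set0 \/ (exists q : R * R, S = [set q]) \/
  (exists a b : R * R, a != b /\ S = line_minus_open_segment a b) \/
  is_line S \/ is_hyperbola S \/ S = setT.
Proof.
move=> /is_lineP [P1 [V1 [nz1 ->]]] /is_lineP [P3 [V3 [nz3 ->]]].
(* the classification holds for any four lines *)
move=> /is_lineP [P2 [V2 [nz2 ->]]] /is_lineP [P4 [V4 [nz4 ->]]] _ _ _.
rewrite -/(allowed_shape _).
have [par13 | cross13] := eqVneq (cross V1 V3) 0;
  have [par24 | cross24] := eqVneq (cross V2 V4) 0.
- have [k nz_k ->] := cross_eq0_scale nz1 nz3 par13.
  have [k' nz_k' ->] := cross_eq0_scale nz2 nz4 par24.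
  by rewrite !param_line_scale //; apply: parallel_pairs_shape.
- have [k nz_k ->] := cross_eq0_scale nz1 nz3 par13.
  by rewrite param_line_scale // rectangle_locusC; apply: crossing_parallel_shape.
- have [k' nz_k' ->] := cross_eq0_scale nz2 nz4 par24.
  by rewrite param_line_scale //; apply: crossing_parallel_shape.
- exact: crossing_pairs_shape.
Qed.
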